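(* Let $m\in\mathbb N$. Let $\mathbf X=(X_1,\dots,X_n)$ be (possibly dependent) component lifetimes and $\mathbf Y_i=(Y_{i1},\dots,Y_{in})$, $i=1,\dots,m$, be vectors of spare lifetimes, all $X_j$ and $Y_{ij}$ identically distributed as $X$. Let $T_C=\tau(\mathbf Z)$, where $\mathbf Z=(Z_1,\dots,Z_n)$, $Z_j=\max\{X_j,Y_{1j},\dots,Y_{mj}\}$ with $X_j,Y_{1j},\dots,Y_{mj}$ independent (active redundancy at component level), and let $T_S=\max\{\tau(\mathbf X),\tau(\mathbf Y_1),\dots,\tau(\mathbf Y_m)\}$ with $\tau(\mathbf X),\tau(\mathbf Y_1),\dots,\tau(\mathbf Y_m)$ independent (active redundancy at system level), where $\tau$ is a coherent structure and $\tau(\mathbf X),\tau(\mathbf Y_i),\tau(\mathbf Z)$ all have the same domination function $h$; thus $\bar F_{T_C}(x)=h\big(1-(1-\bar F_X(x))^{m+1}\big)$ and $\bar F_{T_S}(x)=1-\big(1-h(\bar F_X(x))\big)^{m+1}$. Then $T_S\underset{c}{\prec}T_C$ (resp. $T_S\underset{c}{\succ}T_C$) holds if and only if $$\left(\frac{(1-h(p))^{m}h'(p)}{1-(1-h(p))^{m+1}}\right)\left(\frac{h\big(1-(1-p)^{m+1}\big)}{(1-p)^{m}h'\big(1-(1-p)^{m+1}\big)}\right)$$ is decreasing (resp. increasing) in $p\in(0,1)$.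
   Context: All random variables are non-negative and absolutely continuous with support $[0,\infty)$. For a random variable $W$: density $f_W$, survival $\bar F_W$, hazard rate $r_W=f_W/\bar F_W$. $U\underset{c}{\prec}V$ means $r_U(x)/r_V(x)$ is increasing in $x\ge0$; $U\underset{c}{\succ}V$ means $V\underset{c}{\prec}U$. The domination function $h:[0,1]\to[0,1]$ of a coherent system whose components have common marginal survival function $\bar G$ is the function (depending on structure and survival copula) with system reliability $h(\bar G(x))$; it is increasing, continuous, $h(0)=0$, $h(1)=1$, assumed differentiable. ''Increasing'' means non-decreasing, ''decreasing'' means non-increasing. *)

From Stdlib Require Import Reals.
From Coquelicot Require Import Coquelicot.
Open Scope R_scope.

Definition hazard (S : R -> R) (x : R) : R := - Derive S x / S x.

Definition cless (SU SV : R -> R) : Prop :=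
  forall x y, 0 < x -> x <= y ->
    hazard SU x / hazard SV x <= hazard SU y / hazard SV y.

Definition lifetime_survival (Fb : R -> R) : Prop :=
  (forall x, x <= 0 -> Fb x = 1) /\
  (forall x, continuous Fb x) /\
  (forall x, 0 < x -> ex_derive Fb x /\ Derive Fb x < 0) /\
  is_lim Fb p_infty 0.

Definition domination_function (h : R -> R) : Prop :=
  h 0 = 0 /\ h 1 = 1 /\
  (forall p q, 0 <= p -> p <= q -> q <= 1 -> h p <= h q) /\
  (forall p, 0 <= p <= 1 -> continuity_pt h p) /\
  (forall p, 0 < p < 1 -> ex_derive h p /\ 0 < Derive h p).

Definition surv_TC (h : R -> R) (m : nat) (Fb : R -> R) (x : R) : R :=
  h (1 - (1 - Fb x) ^ (S m)).
Definition surv_TS (h : R -> R) (m : nat) (Fb : R -> R) (x : R) : R :=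
  1 - (1 - h (Fb x)) ^ (S m).

Definition phi (h : R -> R) (m : nat) (p : R) : R :=
  ((1 - h p) ^ m * Derive h p / (1 - (1 - h p) ^ (S m))) *
  (h (1 - (1 - p) ^ (S m)) /
     ((1 - p) ^ m * Derive h (1 - (1 - p) ^ (S m)))).

Definition decreasing_on01 (g : R -> R) : Prop :=
  forall p q, 0 < p -> p <= q -> q < 1 -> g q <= g p.
Definition increasing_on01 (g : R -> R) : Prop :=
  forall p q, 0 < p -> p <= q -> q < 1 -> g p <= g q.

(** The hazard rate of a survival function [g (Fb x)] is [g'(p) / g(p)] at
    [p = Fb x] times [- Fb'(x)].  Both [T_S] and [T_C] are of this form, so
    in the quotient of their hazard rates the factor [- Fb'(x)] cancels and
    what remains is [phi (Fb x)].  Since [Fb] is a strictly decreasing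
    bijection of [(0, oo)] onto [(0, 1)], the quotient increases in [x] iff
    [phi] decreases in [p]; the reverse ordering is the same statement for
    [1 / phi]. *)

From Stdlib Require Import Reals Lra Lia.
From Coquelicot Require Import Coquelicot.
Open Scope R_scope.

Lemma lt_of_Derive_pos (f : R -> R) (a b : R) :
  a < b ->
  (forall x, a <= x <= b -> continuity_pt f x) ->
  (forall x, a < x < b -> ex_derive f x /\ 0 < Derive f x) ->
  f a < f b.
Proof.
  intros Hab Hcont Hder.
  pose (pr := fun c (Hc : a < c < b) => ex_derive_Reals_0 f c (proj1 (Hder c Hc))).
  destruct (MVT f id a b pr (fun c _ => derivable_pt_id c) Hab Hcont
              (fun c _ => derivable_continuous_pt _ _ (derivable_pt_id c)))
    as (c & Hc & Hmvt).
  rewrite derive_pt_id, Derive_Reals in Hmvt. unfold id in Hmvt.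
  pose proof (proj2 (Hder c Hc)) as Hpos.
  nra.
Qed.

Section Survival.

Variable Fb : R -> R.
Hypothesis HF : lifetime_survival Fb.

Lemma survival_lt x y : 0 <= x -> x < y -> Fb y < Fb x.
Proof.
  destruct HF as (_ & Hcont & Hder & _).
  intros Hx Hxy.
  enough (- Fb x < - Fb y) by lra.
  apply (lt_of_Derive_pos (fun z => - Fb z)); [lra | |].
  - intros z _. apply continuity_pt_opp, continuity_pt_filterlim, Hcont.
  - intros z Hz. destruct (Hder z) as [Hex Hneg]; [lra |].
    rewrite Derive_opp. split; [exact (ex_derive_opp Fb z Hex) | lra].
Qed.

Lemma survival_lt_1 x : 0 < x -> Fb x < 1.
Proof.
  intros Hx. rewrite <- (proj1 HF 0) by lra. now apply survival_lt; [lra |].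
Qed.

Lemma survival_pos x : 0 < x -> 0 < Fb x.
Proof.
  intros Hx.
  assert (Hnonneg : Rbar_le 0 (Fb (x + 1))).
  { apply (is_lim_le_loc Fb (fun _ => Fb (x + 1)) p_infty);
      [| apply HF | apply is_lim_const].
    exists (x + 1). intros y Hy. apply Rlt_le, survival_lt; lra. }
  simpl in Hnonneg. pose proof (survival_lt x (x + 1)). lra.
Qed.

Lemma survival_onto q : 0 < q < 1 -> exists x, 0 < x /\ Fb x = q.
Proof.
  intros Hq.
  destruct HF as (H0 & Hcont & _ & Hlim).
  apply is_lim_spec in Hlim.
  destruct (Hlim (mkposreal q (proj1 Hq))) as [M HM]. simpl in HM.
  set (b := Rmax M 0 + 1).
  assert (Hb : M < b /\ 0 < b) by (unfold b; pose proof (Rmax_l M 0); pose proof (Rmax_r M 0); lra).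
  specialize (HM b (proj1 Hb)). rewrite Rminus_0_r in HM. apply Rabs_def2 in HM.
  assert (Hf0 : Fb 0 = 1) by (apply H0; lra).
  destruct (IVT_gen Fb 0 b q) as (x & Hx & Hfx).
  - intros z. apply continuity_pt_filterlim, Hcont.
  - rewrite Hf0, Rmin_right, Rmax_left; lra.
  - rewrite Rmin_left, Rmax_right in Hx by lra.
    exists x. split; [| exact Hfx].
    destruct (Req_dec x 0) as [->|]; lra.
Qed.

Lemma increasing_comp_iff_decreasing (psi : R -> R) :
  (forall x y, 0 < x -> x <= y -> psi (Fb x) <= psi (Fb y)) <->
  decreasing_on01 psi.
Proof.
  split.
  - intros Hinc p q Hp Hpq Hq.
    destruct (survival_onto p) as (y & Hy & <-); [lra |].
    destruct (survival_onto q) as (x & Hx & <-); [lra |].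
    destruct (Rle_or_lt x y) as [Hxy | Hyx].
    + now apply Hinc.
    + pose proof (survival_lt y x). lra.
  - intros Hdec x y Hx Hxy.
    destruct (Req_dec x y) as [<- | Hne]; [lra |].
    pose proof (survival_lt x y). pose proof (survival_lt_1 x Hx).
    pose proof (survival_pos y).
    apply Hdec; lra.
Qed.

End Survival.

Section Domination.

Variable h : R -> R.
Hypothesis Hh : domination_function h.

Lemma domination_lt p q : 0 <= p -> p < q -> q <= 1 -> h p < h q.
Proof.
  destruct Hh as (_ & _ & _ & Hcont & Hder).
  intros Hp Hpq Hq. apply lt_of_Derive_pos; [lra | |].
  - intros x Hx. apply Hcont. lra.
  - intros x Hx. apply Hder. lra.
Qed.

Lemma domination_range p : 0 < p < 1 -> 0 < h p < 1.
Proof.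
  destruct Hh as (H0 & H1 & _).
  intros Hp. rewrite <- H0, <- H1.
  split; apply domination_lt; lra.
Qed.

End Domination.

Definition logderiv (g : R -> R) (p : R) : R := Derive g p / g p.

Lemma hazard_comp (g Fb : R -> R) x :
  ex_derive g (Fb x) -> ex_derive Fb x ->
  hazard (fun y => g (Fb y)) x = logderiv g (Fb x) * - Derive Fb x.
Proof.
  intros Hg HFb. unfold hazard, logderiv.
  rewrite Derive_comp by assumption.
  unfold Rdiv. ring.
Qed.

(* Reliability of [n + 1] independent units in parallel, each of reliability
   [p]: [surv_TS] is [parallel m \o h \o Fb] and [surv_TC] is
   [h \o parallel m \o Fb]. *)
Definition parallel (n : nat) (p : R) : R := 1 - (1 - p) ^ S n.

Lemma parallel_range n p : 0 < p < 1 -> 0 < parallel n p < 1.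
Proof.
  intros Hp. unfold parallel.
  assert (0 < (1 - p) ^ S n) by (apply pow_lt; lra).
  assert ((1 - p) ^ S n < 1) by (apply pow_lt_1_compat; [lra | lia]).
  lra.
Qed.

Lemma is_derive_parallel n p : is_derive (parallel n) p (INR (S n) * (1 - p) ^ n).
Proof.
  unfold parallel. auto_derive; [exact I |].
  change (match n with 0%nat => 1 | S _ => INR n + 1 end) with (INR (S n)).
  replace (1 + - p) with (1 - p) by ring.
  generalize ((1 - p) ^ n). intros. ring.
Qed.

Section Redundancy.

Variables (h : R -> R) (m : nat).
Hypothesis Hh : domination_function h.

Definition system_level (p : R) : R := parallel m (h p).
Definition component_level (p : R) : R := h (parallel m p).

Lemma Derive_system_level p : 0 < p < 1 ->
  Derive system_level p = INR (S m) * (1 - h p) ^ m * Derive h p.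
Proof.
  destruct Hh as (_ & _ & _ & _ & Hder).
  intros Hp. unfold system_level.
  rewrite Derive_comp; [| eexists; apply is_derive_parallel | apply Hder, Hp].
  rewrite (is_derive_unique _ _ _ (is_derive_parallel _ _)). ring.
Qed.

Lemma Derive_component_level p : 0 < p < 1 ->
  Derive component_level p = INR (S m) * (1 - p) ^ m * Derive h (parallel m p).
Proof.
  destruct Hh as (_ & _ & _ & _ & Hder).
  intros Hp. unfold component_level.
  rewrite Derive_comp; [| apply Hder, parallel_range, Hp | eexists; apply is_derive_parallel].
  rewrite (is_derive_unique _ _ _ (is_derive_parallel _ _)). ring.
Qed.

Lemma logderiv_system_level_pos p : 0 < p < 1 -> 0 < logderiv system_level p.
Proof.
  intros Hp. unfold logderiv. rewrite Derive_system_level by exact Hp.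
  pose proof (domination_range h Hh p Hp) as Hhp.
  pose proof (parallel_range m (h p) Hhp).
  assert (0 < Derive h p) by apply Hh, Hp.
  assert (0 < INR (S m)) by (apply lt_0_INR; lia).
  assert (0 < (1 - h p) ^ m) by (apply pow_lt; lra).
  unfold system_level.
  apply Rdiv_lt_0_compat; [repeat apply Rmult_lt_0_compat |]; lra.
Qed.

Lemma logderiv_component_level_pos p : 0 < p < 1 -> 0 < logderiv component_level p.
Proof.
  intros Hp. unfold logderiv. rewrite Derive_component_level by exact Hp.
  pose proof (parallel_range m p Hp) as Hpar.
  pose proof (domination_range h Hh _ Hpar).
  assert (0 < Derive h (parallel m p)) by apply Hh, Hpar.
  assert (0 < INR (S m)) by (apply lt_0_INR; lia).
  assert (0 < (1 - p) ^ m) by (apply pow_lt; lra).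
  unfold component_level.
  apply Rdiv_lt_0_compat; [repeat apply Rmult_lt_0_compat |]; lra.
Qed.

Lemma phi_logderiv p : 0 < p < 1 ->
  phi h m p = logderiv system_level p / logderiv component_level p.
Proof.
  intros Hp.
  pose proof (parallel_range m p Hp) as Hpar.
  pose proof (parallel_range m _ (domination_range h Hh p Hp)).
  pose proof (domination_range h Hh _ Hpar).
  assert (0 < Derive h (parallel m p)) by apply Hh, Hpar.
  assert (0 < INR (S m)) by (apply lt_0_INR; lia).
  assert (0 < (1 - p) ^ m) by (apply pow_lt; lra).
  unfold logderiv.
  rewrite Derive_system_level, Derive_component_level by exact Hp.
  unfold phi, system_level, component_level. fold (parallel m p) (parallel m (h p)).
  field. repeat split; lra.
Qed.

Lemma phi_pos p : 0 < p < 1 -> 0 < phi h m p.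
Proof.
  intros Hp. rewrite phi_logderiv by exact Hp.
  apply Rdiv_lt_0_compat;
    [apply logderiv_system_level_pos | apply logderiv_component_level_pos]; exact Hp.
Qed.

Lemma hazard_ratio_TS_TC Fb x : lifetime_survival Fb -> 0 < x ->
  hazard (surv_TS h m Fb) x / hazard (surv_TC h m Fb) x = phi h m (Fb x).
Proof.
  intros HF Hx.
  assert (Hp : 0 < Fb x < 1) by (split; [apply survival_pos | apply survival_lt_1]; assumption).
  destruct HF as (_ & _ & HdF & _). destruct (HdF x Hx) as [HexF HnegF].
  pose proof Hh as (_ & _ & _ & _ & Hdh).
  pose proof (parallel_range m _ Hp) as Hpar.
  pose proof (logderiv_component_level_pos _ Hp).
  change (hazard (fun y => system_level (Fb y)) x /
          hazard (fun y => component_level (Fb y)) x = phi h m (Fb x)).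
  assert (ex_derive system_level (Fb x)).
  { apply (ex_derive_comp (parallel m) h); [eexists; apply is_derive_parallel | apply Hdh, Hp]. }
  assert (ex_derive component_level (Fb x)).
  { apply (ex_derive_comp h (parallel m)); [apply Hdh, Hpar | eexists; apply is_derive_parallel]. }
  rewrite !hazard_comp, phi_logderiv by assumption.
  field. lra.
Qed.

End Redundancy.

Lemma cless_iff (SU SV r : R -> R) :
  (forall x, 0 < x -> hazard SU x / hazard SV x = r x) ->
  cless SU SV <-> (forall x y, 0 < x -> x <= y -> r x <= r y).
Proof.
  intros Hr. unfold cless.
  split; intros Hmono x y Hx Hxy; specialize (Hmono x y Hx Hxy);
    rewrite ?Hr in * by lra; exact Hmono.
Qed.

Lemma inv_decreasing_iff (g : R -> R) :
  (forall p, 0 < p < 1 -> 0 < g p) ->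
  decreasing_on01 (fun p => / g p) <-> increasing_on01 g.
Proof.
  intros Hpos. unfold decreasing_on01, increasing_on01.
  split; intros Hmono p q Hp Hpq Hq; specialize (Hmono p q Hp Hpq Hq);
    pose proof (Hpos p ltac:(lra)); pose proof (Hpos q ltac:(lra)).
  - rewrite <- (Rinv_inv (g p)), <- (Rinv_inv (g q)).
    apply Rinv_le_contravar; [apply Rinv_0_lt_compat |]; assumption.
  - apply Rinv_le_contravar; assumption.
Qed.

Theorem theorem4p1 (m : nat) (h : R -> R) (Fb : R -> R)
  (Hh : domination_function h) (HF : lifetime_survival Fb) :
  (cless (surv_TS h m Fb) (surv_TC h m Fb) <-> decreasing_on01 (phi h m)) /\
  (cless (surv_TC h m Fb) (surv_TS h m Fb) <-> increasing_on01 (phi h m)).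
Proof.
  pose proof (fun x => hazard_ratio_TS_TC h m Hh Fb x HF) as Hratio.
  split.
  - rewrite (cless_iff _ _ _ Hratio).
    apply increasing_comp_iff_decreasing, HF.
  - rewrite (cless_iff _ _ (fun x => / phi h m (Fb x))).
    + rewrite (increasing_comp_iff_decreasing Fb HF (fun p => / phi h m p)).
      apply inv_decreasing_iff, phi_pos, Hh.
    + intros x Hx. rewrite <- Hratio, Rinv_div by exact Hx. reflexivity.
Qed.
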